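(* Let $l\ge2$ and $m_1,\dots,m_l\ge3$ be integers. The join $C_{m_1}*\dots*C_{m_l}$ of cycles is (isomorphic to) a circulant graph if and only if $m_1=\dots=m_l=m$ for some $m\ge3$. In that case $C_m*\dots*C_m$ ($l$ copies) is isomorphic to $C_{lm}(S)$ where $S=\{s\in\{1,\dots,\lfloor lm/2\rfloor\}: s=l \text{ or } l\nmid s\}$ (i.e. $\{1,\dots,\lfloor lm/2\rfloor\}$ with $2l,3l,\dots$ removed); explicitly, the induced subgraphs on $V_i=\{i,l+i,\dots,(m-1)l+i\}$, $0\le i<l$, are $m$-cycles and all edges between distinct $V_i$ are present.
   Context: $C_m$ is the cycle of length $m$. The circulant graph $C_n(S)$ ($S\subseteq\{1,\dots,\lfloor n/2\rfloor\}$) has vertex set $\{0,\dots,n-1\}$ with $\{a,b\}$ an edge iff $\min(|a-b|,n-|a-b|)\in S$. The join $G*H$ of graphs with disjoint vertex sets has all edges of $G$, of $H$, and all pairs $\{x,y\}$ with $x\in V(G)$, $y\in V(H)$. *)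

From mathcomp Require Import all_boot.
Set Implicit Arguments. Unset Strict Implicit. Unset Printing Implicit Defensive.

Definition graph_iso (V W : finType) (e : rel V) (f : rel W) (g : V -> W) :=
  bijective g /\ forall x y, f (g x) (g y) = e x y.

Definition isomorphic (V W : finType) (e : rel V) (f : rel W) :=
  exists g : V -> W, graph_iso e f g.

Definition cycle_adj (n x y : nat) : bool :=
  (y == x.+1 %% n) || (x == y.+1 %% n).

Definition circ_dist (n a b : nat) : nat :=
  let d := maxn a b - minn a b in minn d (n - d).

Definition circ_adj (n : nat) (S : pred nat) : rel 'I_n :=
  fun a b => S (circ_dist n a b).

(* Join C_{m_0} * ... * C_{m_{l-1}}: vertex (i,k) is vertex k of the i-th cycle;
   edges inside a copy are cycle edges, and all pairs in distinct copies are edges. *)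
Definition join_cycles_adj (l : nat) (m : 'I_l -> nat) :
  rel {i : 'I_l & 'I_(m i)} :=
  fun u v => if tag u == tag v then cycle_adj (m (tag u)) (tagged u) (tagged v)
             else true.

Definition join_conn_set (l m0 : nat) : pred nat :=
  fun s => (1 <= s <= (l * m0)./2) && ((s == l) || ~~ (l %| s)).

Arguments join_cycles_adj {l} m.
Arguments circ_adj : clear implicits.

From mathcomp Require Import all_boot.
From mathcomp Require order.
From mathcomp Require Import zify.

Set Implicit Arguments.
Unset Strict Implicit.
Unset Printing Implicit Defensive.

(* Send vertex k of the i-th copy to k*l + i in Z_{lm}.  Two
   images in the same residue class mod l have circular distance
   (circ_dist_scale) l times the circular distance of k, k' in C_m, so they are
   adjacent in C_{lm}(S) iff that distance is 1, i.e. iff k ~ k' in C_m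
   (cycle_adj_circ_dist, join_conn_set_multiple).  Images in distinct classes
   have a circular distance not divisible by l (not_dvd_circ_dist), hence in S.
   A counting argument turns the resulting injection into a bijection.

   Circulant graphs are vertex-transitive via rotations, hence
   regular (circ_degree_const), and isomorphisms preserve degrees (iso_degree).
   In the join, a vertex of the i-th cycle misses exactly m_i - 2 vertices
   (join_degree), so regularity forces all m_i to be equal. *)

Lemma modn_lt2n x n : x < n + n -> x %% n = if x < n then x else x - n.
Proof.
move=> x_lt; case: ltnP => x_ge; first by rewrite modn_small.
have -> : x = (x - n) + n by lia.
rewrite modnDr modn_small; lia.
Qed.

Lemma circ_dist_le_half n a b : a < n -> b < n -> circ_dist n a b <= n./2.
Proof. rewrite /circ_dist => *; lia. Qed.

Lemma circ_dist_gt0 n a b : a < n -> b < n -> a != b -> 0 < circ_dist n a b.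
Proof. rewrite /circ_dist => *; lia. Qed.

Lemma cycle_adj_circ_dist M k k' : 3 <= M -> k < M -> k' < M ->
  cycle_adj M k k' = (circ_dist M k k' == 1).
Proof.
move=> M_ge3 k_lt k'_lt; rewrite /cycle_adj /circ_dist.
rewrite (@modn_lt2n k.+1 M) ?(@modn_lt2n k'.+1 M); try lia.
by case: (ltnP k.+1 M); case: (ltnP k'.+1 M) => *; apply/idP/idP; lia.
Qed.

Lemma circ_dist_shift n a x y : a < n -> x < n -> y < n ->
  circ_dist n ((x + a) %% n) ((y + a) %% n) = circ_dist n x y.
Proof.
move=> a_lt x_lt y_lt; rewrite (@modn_lt2n (x + a) n) ?(@modn_lt2n (y + a) n); try lia.
by rewrite /circ_dist; case: ltnP => ?; case: ltnP => ?; lia.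
Qed.

Lemma circ_dist_scale n c a b i :
  circ_dist (n * c) (a * c + i) (b * c + i) = circ_dist n a b * c.
Proof.
rewrite /circ_dist -!addn_maxl -!addn_minl subnDr.
by rewrite -maxnMl -minnMl -!mulnBl minnMl.
Qed.

Lemma not_dvd_circ_dist l n a b : l %| n -> a < n -> b < n ->
  a %% l != b %% l -> ~~ (l %| circ_dist n a b).
Proof.
move=> l_dvd_n a_lt b_lt ab_mod.
set d := maxn a b - minn a b.
have d_ndvd : ~~ (l %| d).
  rewrite /d; case: (leqP b a) => ba.
  - by rewrite -eqn_mod_dvd // eq_sym.
  - by rewrite -eqn_mod_dvd ?(ltnW ba) // eq_sym.
rewrite /circ_dist -/d; case: (leqP d (n - d)) => _ //.
apply: contra d_ndvd => l_dvd_nd.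
have d_le : d <= n.
  by apply: leq_trans (leq_subr _ _) _; rewrite geq_max (ltnW a_lt) (ltnW b_lt).
by rewrite -(subKn d_le) dvdn_sub.
Qed.

Lemma lattice_lt l m k i : k < m -> i < l -> k * l + i < l * m.
Proof.
move=> k_lt i_lt; have : k.+1 * l <= m * l by rewrite leq_mul2r k_lt orbT.
by rewrite mulSn [l * m]mulnC; lia.
Qed.

Lemma join_conn_set_multiple l m0 t : 0 < l -> 2 <= m0 ->
  t * l <= (l * m0)./2 -> join_conn_set l m0 (t * l) = (t == 1).
Proof.
move=> l_gt0 m0_ge2 tl_le; rewrite /join_conn_set dvdn_mull // orbF.
have [-> | t_ne1] := eqVneq t 1.
  rewrite mul1n eqxx l_gt0 andbT /=.
  have : l * 2 <= l * m0 by rewrite leq_mul2l m0_ge2 orbT.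
  lia.
have -> : (t * l == l) = false by apply/eqP; nia.
by rewrite andbF.
Qed.

Lemma join_conn_set_lattice l m0 i j k k' :
  2 <= l -> 3 <= m0 -> i < l -> j < l -> k < m0 -> k' < m0 ->
  join_conn_set l m0 (circ_dist (l * m0) (k * l + i) (k' * l + j)) =
  (if i == j then cycle_adj m0 k k' else true).
Proof.
move=> l_ge2 m0_ge3 i_lt j_lt k_lt k'_lt.
have a_lt := lattice_lt k_lt i_lt.
have b_lt := lattice_lt k'_lt j_lt.
have half := circ_dist_le_half a_lt b_lt.
case: (eqVneq i j) b_lt half => [<- | i_ne_j] b_lt half.
  rewrite cycle_adj_circ_dist // [l * m0]mulnC circ_dist_scale.
  rewrite [l * m0]mulnC circ_dist_scale [m0 * l]mulnC in half.
  by rewrite join_conn_set_multiple //; lia.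
have mod_ne : (k * l + i) %% l != (k' * l + j) %% l by rewrite !modnMDl !modn_small.
have ab_ne : k * l + i != k' * l + j by apply: contraNneq mod_ne => ->.
rewrite /join_conn_set (circ_dist_gt0 a_lt b_lt ab_ne) half.
by rewrite (not_dvd_circ_dist (dvdn_mulr _ (dvdnn l)) a_lt b_lt mod_ne) orbT.
Qed.

Section Construction.

Variables (l m0 : nat) (m : 'I_l -> nat).
Hypotheses (l_ge2 : 2 <= l) (m0_ge3 : 3 <= m0) (m_eq : forall i, m i = m0).

Lemma lattice_pos_lt (v : {i : 'I_l & 'I_(m i)}) : tagged v * l + tag v < l * m0.
Proof.
by case: v => i k /=; apply: lattice_lt; rewrite -?(m_eq i).
Qed.

Definition join_to_circ (v : {i : 'I_l & 'I_(m i)}) : 'I_(l * m0) :=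
  Ordinal (lattice_pos_lt v).

(* The position determines the copy (residue mod l) and then the vertex. *)
Lemma join_to_circ_inj : injective join_to_circ.
Proof.
move=> [i k] [j k'] /(congr1 val) /= eq_pos.
have i_lt := ltn_ord i; have j_lt := ltn_ord j.
have /val_inj ij : val i = val j.
  by move/(congr1 (modn^~ l)): eq_pos; rewrite !modnMDl !modn_small.
subst j; congr existT; apply: val_inj => /=; apply/eqP.
by rewrite -(eqn_pmul2r (ltnW l_ge2)) -(eqn_add2r i) eq_pos.
Qed.

(* Both vertex sets have l * m0 elements, so the injection is a bijection. *)
Lemma join_to_circ_bij : bijective join_to_circ.
Proof.
apply: inj_card_bij; first exact: join_to_circ_inj.
rewrite card_ord order.tagnat.card.
under eq_bigr => i _ do rewrite m_eq.
by rewrite sum_nat_const card_ord mulnC.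
Qed.

Lemma join_to_circ_iso :
  graph_iso (join_cycles_adj m) (circ_adj (l * m0) (join_conn_set l m0)) join_to_circ.
Proof.
split; first exact: join_to_circ_bij.
move=> [i k] [j k']; rewrite /circ_adj /join_cycles_adj /=.
have k_lt : k < m0 by rewrite -(m_eq i).
have k'_lt : k' < m0 by rewrite -(m_eq j).
have cycle_eq x y : cycle_adj (m i) x y = cycle_adj m0 x y by rewrite m_eq.
by rewrite join_conn_set_lattice // cycle_eq.
Qed.

End Construction.

Definition degree (V : finType) (e : rel V) (v : V) : nat := #|[pred w | e v w]|.

Lemma iso_degree (V W : finType) (e : rel V) (f : rel W) (g : V -> W) :
  graph_iso e f g -> forall v, degree e v = degree f (g v).
Proof.
move=> [[h gK hK] g_edge] v; rewrite /degree -(card_image (can_inj gK)).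
apply: eq_card => w; rewrite !inE.
apply/imageP/idP => [[x x_nbr ->] | w_nbr]; first by rewrite g_edge.
by exists (h w); rewrite ?hK // inE /= -g_edge hK.
Qed.

Definition circ_rot n (a x : 'I_n) : 'I_n :=
  Ordinal (ltn_pmod (x + a) (leq_ltn_trans (leq0n a) (ltn_ord a))).

Lemma circ_rot_iso n S (a : 'I_n) : graph_iso (circ_adj n S) (circ_adj n S) (circ_rot a).
Proof.
split; last by move=> x y; rewrite /circ_adj /= circ_dist_shift.
apply: injF_bij => x y /(congr1 val) /=.
have := ltn_ord x; have := ltn_ord y; have := ltn_ord a => a_lt y_lt x_lt.
rewrite (@modn_lt2n (x + a) n) ?(@modn_lt2n (y + a) n); try lia.
move=> eq_xy; apply: val_inj => /=; move: eq_xy.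
by case: ltnP => ?; case: ltnP => ?; lia.
Qed.

(* Circulant graphs are regular, being vertex-transitive. *)
Lemma circ_degree_const n S (a b : 'I_n) :
  degree (circ_adj n S) a = degree (circ_adj n S) b.
Proof.
suff rot0 c (z : 'I_n) : val z = 0 -> degree (circ_adj n S) c = degree (circ_adj n S) z.
  have z_lt : 0 < n := leq_ltn_trans (leq0n a) (ltn_ord a).
  by rewrite (rot0 a (Ordinal z_lt)) // (rot0 b (Ordinal z_lt)).
move=> z0; rewrite (iso_degree (circ_rot_iso S c) z); congr degree.
by apply: val_inj; rewrite /= z0 add0n modn_small.
Qed.

Lemma cycle_degree0 M : 3 <= M -> #|[pred k : 'I_M | cycle_adj M 0 k]| = 2.
Proof.
move=> M_ge3; have one_lt : 1 < M by lia.
have pred_lt : M.-1 < M by lia.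
have -> : 2 = #|[set Ordinal one_lt; Ordinal pred_lt]|.
  by rewrite cards2 -val_eqE /=; have -> : (1 == M.-1) = false by apply/eqP; lia.
apply: eq_card => k; rewrite !inE -!val_eqE /= /cycle_adj.
have k_lt := ltn_ord k.
rewrite (modn_small one_lt) (@modn_lt2n k.+1 M); last lia.
by case: ltnP => ? /=; apply/idP/idP; lia.
Qed.

Lemma join_degree l (m : 'I_l -> nat) i (k0 : 'I_(m i)) : val k0 = 0 -> 3 <= m i ->
  degree (join_cycles_adj m) (Tagged (fun j => 'I_(m j)) k0) + (m i - 2)
  = #|{: {j : 'I_l & 'I_(m j)}}|.
Proof.
move=> k0_eq0 m_ge3; set u := Tagged (fun j => 'I_(m j)) k0.
rewrite /degree -(cardC [pred w | join_cycles_adj m u w]).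
congr (_ + _).
have tag_inj : injective (fun k : 'I_(m i) => Tagged (fun j => 'I_(m j)) k).
  by move=> x y; apply: eq_from_Tagged.
have non_nbrs := cardC [pred k : 'I_(m i) | cycle_adj (m i) 0 k].
rewrite cycle_degree0 // card_ord in non_nbrs.
rewrite -[in LHS]non_nbrs addKn -(card_image tag_inj); apply: eq_card => w.
rewrite !inE; apply/imageP/idP.
- by move=> [k' k'_non ->]; rewrite /join_cycles_adj /= eqxx k0_eq0.
- case: w => j k'; rewrite /join_cycles_adj /=.
  case: (eqVneq i j) => [ij | //]; subst j => k'_non.
  by exists k'; rewrite // inE -k0_eq0.
Qed.

Theorem lemma4p1 (l : nat) (m : 'I_l -> nat) :
  2 <= l -> (forall i, 3 <= m i) ->
  ((exists (n : nat) (S : pred nat),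
       (forall s, S s -> 1 <= s <= n./2) /\
       isomorphic (join_cycles_adj m) (circ_adj n S))
   <-> (exists m0, 3 <= m0 /\ forall i, m i = m0))
  /\
  (forall m0, (forall i, m i = m0) ->
     exists g : {i : 'I_l & 'I_(m i)} -> 'I_(l * m0),
       graph_iso (join_cycles_adj m) (circ_adj (l * m0) (join_conn_set l m0)) g /\
       forall v, val (g v) = val (tagged v) * l + val (tag v)).
Proof.
move=> l_ge2 m_ge3.
have construction m0 (m_eq : forall i, m i = m0) :
    graph_iso (join_cycles_adj m) (circ_adj (l * m0) (join_conn_set l m0))
              (join_to_circ m_eq).
  by apply: join_to_circ_iso; rewrite // -(m_eq (Ordinal (ltnW l_ge2))).
split; last by move=> m0 m_eq; exists (join_to_circ m_eq); split.
split=> [[n [S [_ [g g_iso]]]] | [m0 [m0_ge3 m_eq]]]; last first.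
  exists (l * m0), (join_conn_set l m0); split; first by move=> s /andP [].
  by exists (join_to_circ m_eq).
pose i0 : 'I_l := Ordinal (ltnW l_ge2).
exists (m i0); split=> [|i]; first exact: m_ge3.
pose root j : 'I_(m j) := Ordinal (leq_trans (isT : 0 < 3) (m_ge3 j)).
have := join_degree (k0 := root i) erefl (m_ge3 i).
have := join_degree (k0 := root i0) erefl (m_ge3 i0).
rewrite !(iso_degree g_iso).
rewrite (circ_degree_const S (g (Tagged _ (root i))) (g (Tagged _ (root i0)))) => <-.
by move/addnI/(congr1 (addn 2)); rewrite !subnKC // ltnW.
Qed.
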